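(* Let $G$ be a locally compact group acting on a topological space $X$. Let $(g_\alpha)$ be a net in $G$ converging to infinity, and assume that for some $x,y\in X$ the net $(g_\alpha x)$ converges to $y$. Then there exist a directed set $(\beta)$ and two nets $n,n':(\beta)\to G$ such that $n(\beta)x\to y$ and $n'(\beta)x\to y$ in $X$, and $n(\beta)^{-1}n'(\beta)\to\infty$ in $G$.
   Context: A net $(g_\alpha)$ in a locally compact space converges to infinity if for every compact $K$ there is $\alpha_0$ with $g_\alpha\notin K$ for all $\alpha\ge\alpha_0$. *)

From Stdlib Require Import List.

Record topology (T : Type) : Type := Topology {
  is_open : (T -> Prop) -> Prop;
  open_full : is_open (fun _ => True);
  open_inter : forall U V, is_open U -> is_open V ->
                 is_open (fun x => U x /\ V x);
  open_union : forall (I : Type) (F : I -> T -> Prop),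
                 (forall i, is_open (F i)) -> is_open (fun x => exists i, F i x)
}.
Arguments is_open {T} _ _.

Definition compact {T : Type} (tau : topology T) (K : T -> Prop) : Prop :=
  forall (I : Type) (F : I -> T -> Prop),
    (forall i, is_open tau (F i)) ->
    (forall x, K x -> exists i, F i x) ->
    exists l : list I, forall x, K x -> exists i, In i l /\ F i x.

Definition hausdorff {T : Type} (tau : topology T) : Prop :=
  forall x y, x <> y -> exists U V, is_open tau U /\ is_open tau V /\
    U x /\ V y /\ forall z, ~ (U z /\ V z).

Definition locally_compact {T : Type} (tau : topology T) : Prop :=
  forall x, exists U K, is_open tau U /\ U x /\ compact tau K /\
    forall z, U z -> K z.

(* Continuity of a map, and joint continuity of a two-variable map
   (w.r.t. the product topology, phrased via basic open rectangles). *)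
Definition continuous {A B : Type} (tA : topology A) (tB : topology B)
  (f : A -> B) : Prop :=
  forall V, is_open tB V -> is_open tA (fun a => V (f a)).

Definition continuous2 {A B C : Type} (tA : topology A) (tB : topology B)
  (tC : topology C) (f : A -> B -> C) : Prop :=
  forall W, is_open tC W -> forall a b, W (f a b) ->
    exists U V, is_open tA U /\ is_open tB V /\ U a /\ V b /\
      forall a' b', U a' -> V b' -> W (f a' b').

Definition directed {D : Type} (le : D -> D -> Prop) : Prop :=
  inhabited D /\
  (forall a, le a a) /\
  (forall a b c, le a b -> le b c -> le a c) /\
  (forall a b, exists c, le a c /\ le b c).

Definition net_converges {D T : Type} (le : D -> D -> Prop) (tau : topology T)
  (u : D -> T) (y : T) : Prop :=
  forall U, is_open tau U -> U y -> exists a0, forall a, le a0 a -> U (u a).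

Definition net_to_infinity {D T : Type} (le : D -> D -> Prop) (tau : topology T)
  (u : D -> T) : Prop :=
  forall K, compact tau K -> exists a0, forall a, le a0 a -> ~ K (u a).

Record group_struct (G : Type) : Type := GroupStruct {
  gmul : G -> G -> G;
  ginv : G -> G;
  gone : G;
  gmulA : forall a b c, gmul a (gmul b c) = gmul (gmul a b) c;
  gmul1l : forall a, gmul gone a = a;
  gmulVl : forall a, gmul (ginv a) a = gone
}.
Arguments gmul {G} _ _ _.
Arguments ginv {G} _ _.
Arguments gone {G} _.

Definition locally_compact_group {G : Type} (grp : group_struct G)
  (tau : topology G) : Prop :=
  continuous2 tau tau tau (gmul grp) /\ continuous tau tau (ginv grp) /\
  hausdorff tau /\ locally_compact tau.

Definition continuous_action {G X : Type} (grp : group_struct G)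
  (tau : topology G) (sigma : topology X) (act : G -> X -> X) : Prop :=
  (forall x, act (gone grp) x = x) /\
  (forall g h x, act (gmul grp g h) x = act g (act h x)) /\
  continuous2 tau sigma sigma act.

(* Pairs of indices a <= a' whose "relative position" g(a)^-1 g(a') avoids a
   given compact set K exist for every K and a, because g eventually leaves the
   compact translate g(a) K.  Triples (K, a, a') of this kind, ordered by
   inclusion of K and by a, form a directed set; along it both g(a) and g(a')
   are subnets of g, so g(a) x and g(a') x still converge to y, while
   g(a)^-1 g(a') eventually avoids every compact set. *)

From Stdlib Require Import List FunctionalExtensionality PropExtensionality.

Lemma open_of_locally_open {T : Type} (tau : topology T) (P : T -> Prop) :
  (forall z, P z -> exists V, is_open tau V /\ V z /\ forall w, V w -> P w) ->
  is_open tau P.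
Proof.
  intros H.
  set (I := {V : T -> Prop | is_open tau V /\ forall w, V w -> P w}).
  replace P with (fun z => exists i : I, proj1_sig i z).
  - apply open_union. intro i. exact (proj1 (proj2_sig i)).
  - apply functional_extensionality; intro z.
    apply propositional_extensionality; split.
    + intros [[V [HV HVP]] Vz]. exact (HVP z Vz).
    + intros Pz. destruct (H z Pz) as [V [HV [Vz HVP]]].
      exists (exist _ V (conj HV HVP)). exact Vz.
Qed.

Lemma continuous2_l {A B C : Type} (tA : topology A) (tB : topology B)
  (tC : topology C) (f : A -> B -> C) (a : A) :
  continuous2 tA tB tC f -> continuous tB tC (f a).
Proof.
  intros Hf W HW. apply open_of_locally_open. intros b Wb.
  destruct (Hf W HW a b Wb) as [U [V [_ [HV [Ua [Vb HUV]]]]]].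
  exists V. repeat split; auto.
Qed.

Lemma compact_empty {T : Type} (tau : topology T) : compact tau (fun _ => False).
Proof. intros I F _ _. exists nil. intros x []. Qed.

Lemma compact_union {T : Type} (tau : topology T) (K1 K2 : T -> Prop) :
  compact tau K1 -> compact tau K2 -> compact tau (fun z => K1 z \/ K2 z).
Proof.
  intros H1 H2 I F HF Hcov.
  destruct (H1 I F HF (fun x h => Hcov x (or_introl h))) as [l1 Hl1].
  destruct (H2 I F HF (fun x h => Hcov x (or_intror h))) as [l2 Hl2].
  exists (l1 ++ l2). intros x [h | h].
  - destruct (Hl1 x h) as [i [Hi Fi]]. exists i. auto using in_or_app.
  - destruct (Hl2 x h) as [i [Hi Fi]]. exists i. auto using in_or_app.
Qed.

Lemma compact_image {S T : Type} (tS : topology S) (tT : topology T)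
  (f : S -> T) (K : S -> Prop) :
  continuous tS tT f -> compact tS K ->
  compact tT (fun z => exists k, K k /\ z = f k).
Proof.
  intros Hf HK I F HF Hcov.
  destruct (HK I (fun i k => F i (f k))) as [l Hl].
  - intro i. exact (Hf _ (HF i)).
  - intros k Kk. apply Hcov. exists k; auto.
  - exists l. intros z [k [Kk ->]]. exact (Hl k Kk).
Qed.

Lemma gmulV {G : Type} (grp : group_struct G) (a : G) :
  gmul grp a (ginv grp a) = gone grp.
Proof.
  rewrite <- (gmul1l _ grp (gmul grp a (ginv grp a))).
  rewrite <- (gmulVl _ grp (ginv grp a)) at 1.
  rewrite <- gmulA, (gmulA _ grp (ginv grp a) a), gmulVl, gmul1l.
  apply gmulVl.
Qed.

Lemma gmulKV {G : Type} (grp : group_struct G) (a b : G) :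
  gmul grp (ginv grp a) (gmul grp a b) = b.
Proof. rewrite gmulA, gmulVl. apply gmul1l. Qed.

Lemma net_converges_comp {D E T : Type} (leD : D -> D -> Prop)
  (leE : E -> E -> Prop) (tau : topology T) (u : D -> T) (y : T) (phi : E -> D) :
  (forall d0, exists e0, forall e, leE e0 e -> leD d0 (phi e)) ->
  net_converges leD tau u y -> net_converges leE tau (fun e => u (phi e)) y.
Proof.
  intros Hphi Hu U HU Uy.
  destruct (Hu U HU Uy) as [d0 Hd0]. destruct (Hphi d0) as [e0 He0].
  exists e0. auto.
Qed.

Section EscapeTriples.

Variables (G : Type) (grp : group_struct G) (tau : topology G).
Variables (A : Type) (leA : A -> A -> Prop) (g : A -> G).
Hypothesis hmul : continuous2 tau tau tau (gmul grp).
Hypothesis hA : directed leA.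
Hypothesis hg : net_to_infinity leA tau g.

Lemma net_to_infinity_escape (K : G -> Prop) (a : A) :
  compact tau K ->
  exists a', leA a a' /\ ~ K (gmul grp (ginv grp (g a)) (g a')).
Proof.
  intros HK. destruct hA as [_ [_ [_ Hup]]].
  destruct (hg _ (compact_image tau tau _ K (continuous2_l _ _ _ _ (g a) hmul) HK))
    as [a0 Ha0].
  destruct (Hup a a0) as [a' [Haa' Ha0a']].
  exists a'. split; [exact Haa' |]. intros HKa'.
  apply (Ha0 a' Ha0a'). exists (gmul grp (ginv grp (g a)) (g a')).
  split; [exact HKa' |]. rewrite gmulA, gmulV. symmetry. apply gmul1l.
Qed.

Record escape := Escape {
  esc_set : G -> Prop;
  esc_compact : compact tau esc_set;
  esc_fst : A;
  esc_snd : A;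
  esc_le : leA esc_fst esc_snd;
  esc_out : ~ esc_set (gmul grp (ginv grp (g esc_fst)) (g esc_snd))
}.

Definition escape_le (e e' : escape) : Prop :=
  (forall z, esc_set e z -> esc_set e' z) /\ leA (esc_fst e) (esc_fst e').

Lemma escape_exists (K : G -> Prop) (a : A) :
  compact tau K -> exists e, esc_set e = K /\ esc_fst e = a.
Proof.
  intros HK. destruct (net_to_infinity_escape K a HK) as [a' [Haa' Hout]].
  exists (Escape K HK a a' Haa' Hout). auto.
Qed.

Lemma escape_directed : directed escape_le.
Proof.
  destruct hA as [[a] [Hrefl [Htrans Hup]]].
  split; [| split; [| split]].
  - destruct (escape_exists _ a (compact_empty tau)) as [e _]. exact (inhabits e).
  - intro e. split; auto.
  - intros e1 e2 e3 [H12 H12'] [H23 H23']. split; eauto.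
  - intros e1 e2. destruct (Hup (esc_fst e1) (esc_fst e2)) as [c [H1c H2c]].
    destruct (escape_exists _ c (compact_union tau _ _ (esc_compact e1) (esc_compact e2)))
      as [e [HK Hc]].
    exists e. unfold escape_le. rewrite HK, Hc. auto.
Qed.

Lemma escape_fst_cofinal (a0 : A) :
  exists e0, forall e, escape_le e0 e -> leA a0 (esc_fst e).
Proof.
  destruct (escape_exists _ a0 (compact_empty tau)) as [e0 [_ He0]].
  exists e0. intros e [_ Hle]. rewrite <- He0. exact Hle.
Qed.

Lemma escape_snd_cofinal (a0 : A) :
  exists e0, forall e, escape_le e0 e -> leA a0 (esc_snd e).
Proof.
  destruct hA as [_ [_ [Htrans _]]].
  destruct (escape_fst_cofinal a0) as [e0 He0].
  exists e0. intros e Hle. eapply Htrans; [exact (He0 e Hle) | apply esc_le].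
Qed.

Lemma escape_to_infinity :
  net_to_infinity escape_le tau
    (fun e => gmul grp (ginv grp (g (esc_fst e))) (g (esc_snd e))).
Proof.
  destruct hA as [[a] _]. intros K HK.
  destruct (escape_exists K a HK) as [e0 [He0 _]].
  exists e0. intros e [Hsub _] HKe. apply (esc_out e), Hsub. rewrite He0. exact HKe.
Qed.

End EscapeTriples.

Arguments esc_fst {G grp tau A leA g}.
Arguments esc_snd {G grp tau A leA g}.

Theorem lemma2p2 (G X : Type) (grp : group_struct G) (tau : topology G)
  (sigma : topology X) (act : G -> X -> X)
  (hG : locally_compact_group grp tau)
  (hact : continuous_action grp tau sigma act)
  (A : Type) (leA : A -> A -> Prop) (hA : directed leA)
  (g : A -> G) (hg : net_to_infinity leA tau g)
  (x y : X) (hxy : net_converges leA sigma (fun a => act (g a) x) y) :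
  exists (B : Type) (leB : B -> B -> Prop), directed leB /\
    exists n n' : B -> G,
      net_converges leB sigma (fun b => act (n b) x) y /\
      net_converges leB sigma (fun b => act (n' b) x) y /\
      net_to_infinity leB tau (fun b => gmul grp (ginv grp (n b)) (n' b)).
Proof.
  destruct hG as [hmul _].
  exists (escape G grp tau A leA g), (escape_le G grp tau A leA g).
  split; [exact (escape_directed G grp tau A leA g hmul hA hg) |].
  exists (fun e => g (esc_fst e)), (fun e => g (esc_snd e)).
  split; [| split].
  - exact (net_converges_comp _ _ _ _ _ _ (escape_fst_cofinal G grp tau A leA g hmul hA hg) hxy).
  - exact (net_converges_comp _ _ _ _ _ _ (escape_snd_cofinal G grp tau A leA g hmul hA hg) hxy).
  - exact (escape_to_infinity G grp tau A leA g hmul hA hg).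
Qed.
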